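(* Let $1\le r\le s\le t$ and let $u=ABCd$, $v=A'B'C'd'$ be vertices of $E3C(r,s,t)$ with $A\ne A'$, $B=B'$, $C=C'$ and $d\ne d'$. Then there exist $2r+2$ pairwise internally disjoint $u$–$v$ paths in $E3C(r,s,t)$, each of length at most $r+8$ if $\{d,d'\}=\{0,1\}$, and each of length at most $r+6$ if $\{d,d'\}=\{0,2\}$ or $\{d,d'\}=\{1,2\}$.
   Context: The exchanged 3-ary $n$-cube $E3C(r,s,t)$ ($r,s,t\ge1$, $n=r+s+t+1$): vertices are strings written $x=ABCd$ with $A\in\{0,1,2\}^r$, $B\in\{0,1,2\}^s$, $C\in\{0,1,2\}^t$, $d\in\{0,1,2\}$. Two distinct vertices $x=ABCd$, $y=A'B'C'd'$ are adjacent iff one of: (E0) $A=A',B=B',C=C'$ and $d\ne d'$; (E1) $d=d'=0$, $A=A'$, $B=B'$ and $C,C'$ differ in exactly one position; (E2) $d=d'=1$, $A=A'$, $C=C'$ and $B,B'$ differ in exactly one position; (E3) $d=d'=2$, $B=B'$, $C=C'$ and $A,A'$ differ in exactly one position. Paths are internally disjoint if they share no vertices other than their endpoints; length = number of edges. *)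

From mathcomp Require Import all_boot.
Set Implicit Arguments. Unset Strict Implicit. Unset Printing Implicit Defensive.

Definition word (k : nat) := {ffun 'I_k -> 'I_3}.
Definition e3c_vertex (r s t : nat) : finType :=
  (word r * word s * word t * 'I_3)%type.

Definition vA r s t (x : e3c_vertex r s t) : word r := x.1.1.1.
Definition vB r s t (x : e3c_vertex r s t) : word s := x.1.1.2.
Definition vC r s t (x : e3c_vertex r s t) : word t := x.1.2.
Definition vd r s t (x : e3c_vertex r s t) : 'I_3 := x.2.

Definition differ1 k (a b : word k) : bool := #|[set i | a i != b i]| == 1.

Definition e3c_adj r s t (x y : e3c_vertex r s t) : bool :=
  (x != y) &&
  [|| [&& vA x == vA y, vB x == vB y, vC x == vC y & vd x != vd y]
    , [&& (vd x == 0 :> nat), (vd y == 0 :> nat), vA x == vA y, vB x == vB y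
          & differ1 (vC x) (vC y)]
    , [&& (vd x == 1 :> nat), (vd y == 1 :> nat), vA x == vA y, vC x == vC y
          & differ1 (vB x) (vB y)]
    | [&& (vd x == 2 :> nat), (vd y == 2 :> nat), vB x == vB y, vC x == vC y
          & differ1 (vA x) (vA y)]].

(* A u-v path is a vertex sequence u :: p (ending in v) without repeated
   vertices whose consecutive vertices are adjacent; its length is size p. *)
Definition is_path r s t (u v : e3c_vertex r s t) (p : seq (e3c_vertex r s t)) : bool :=
  [&& path (@e3c_adj r s t) u p, last u p == v & uniq (u :: p)].

Definition interior r s t (p : seq (e3c_vertex r s t)) : seq (e3c_vertex r s t) :=
  take (size p).-1 p.

Definition int_disjoint_paths r s t (u v : e3c_vertex r s t)
    (P : seq (seq (e3c_vertex r s t))) : bool :=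
  [&& all (is_path u v) P, uniq P &
      [forall i : 'I_(size P), forall j : 'I_(size P),
         (i != j) ==> ~~ has (mem (interior (nth [::] P i))) (interior (nth [::] P j))]].

Definition dset_is r s t (u v : e3c_vertex r s t) (a b : nat) : bool :=
  ((vd u == a :> nat) && (vd v == b :> nat)) ||
  ((vd u == b :> nat) && (vd v == a :> nat)).

From mathcomp Require Import all_boot zify.
Set Implicit Arguments. Unset Strict Implicit. Unset Printing Implicit Defensive.

(* Joining [u] in layer 0 to [v] in layer 1, each of the 2r+2 paths climbs to layer 2
   through a pair of middle words of its own (the pair [(B, C)], the 2r pairs [(B', C)] with
   [B'] obtained from [B] by changing one of its first r letters, or one pair [(B, C')]),
   walks there from [A] to [A'] one letter at a time (at most r edges) and comes down to
   [v]; so a vertex determines the path it lies on.  Joining layer 2 to layer 0 is similar,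
   except that the 2r paths through the pair [(B, C)] are told apart by their first step, to
   one of the 2r neighbours of [A] in layer 2: the walk from [A] to [A'] starts at one of them
   and never meets another.  The remaining pairs of layers follow by reversing paths and by
   the isomorphism E3C(r,s,t) ~ E3C(r,t,s) exchanging [B] with [C] and layer 0 with layer 1. *)

Definition d0 : 'I_3 := @Ordinal 3 0 isT.
Definition d1 : 'I_3 := @Ordinal 3 1 isT.
Definition d2 : 'I_3 := @Ordinal 3 2 isT.

Lemma digit_cases (d : 'I_3) : [\/ d = d0, d = d1 | d = d2].
Proof.
by case: d => [[|[|[|?]]] ?] //; [apply: Or31 | apply: Or32 | apply: Or33]; apply: val_inj.
Qed.

(* [other_digit x false] and [other_digit x true] are the two digits distinct from [x]. *)
Definition other_digit (x : 'I_3) (b : bool) : 'I_3 := inord ((x + 1 + b) %% 3).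

Lemma other_digit_neq x b : other_digit x b != x.
Proof.
by case: x => [[|[|[|?]]] ?] //; case: b; apply/eqP; move/(congr1 val); rewrite /= inordK.
Qed.

Lemma other_digit_inj x : injective (other_digit x).
Proof.
by case: x => [[|[|[|?]]] ?] //; do 2!case => //; move/(congr1 val); rewrite /= !inordK.
Qed.

Lemma other_digitP x y : y != x -> exists b, y = other_digit x b.
Proof.
case: x => [[|[|[|?]]] ?] //; case: y => [[|[|[|?]]] ?] // _;
  solve [exists false; apply/val_inj; rewrite /= inordK //
        | exists true; apply/val_inj; rewrite /= inordK //].
Qed.

Definition flip k (w : word k) (i : 'I_k) (b : bool) : word k :=
  [ffun j => if j == i then other_digit (w i) b else w j].

Section Words.
Variable k : nat.
Implicit Types (a w : word k) (i : 'I_k) (b : bool).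

Lemma differ1C a w : differ1 a w = differ1 w a.
Proof.
rewrite /differ1 (_ : [set i | a i != w i] = [set i | w i != a i]) //.
by apply/setP => i; rewrite !inE eq_sym.
Qed.

Lemma differ1_neq a w : differ1 a w -> a != w.
Proof.
rewrite /differ1; apply: contraL => /eqP ->.
by rewrite (_ : [set i | w i != w i] = set0) ?cards0 //; apply/setP => i; rewrite !inE eqxx.
Qed.

Lemma differ1_flip w i b : differ1 w (flip w i b).
Proof.
rewrite /differ1 (_ : [set j | w j != flip w i b j] = [set i]) ?cards1 //.
apply/setP => j; rewrite !inE ffunE; case: (j =P i) => [->|_]; last by rewrite eqxx.
by rewrite eq_sym other_digit_neq.
Qed.

Lemma flip_inj w i b i' b' : flip w i b = flip w i' b' -> (i, b) = (i', b').
Proof.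
move=> E; have Ew j : flip w i b j = flip w i' b' j by rewrite E.
have Ei : i = i'.
  apply/eqP; apply: contraT => ne; move: (Ew i); rewrite !ffunE eqxx (negbTE ne) => /eqP.
  by rewrite (negbTE (other_digit_neq _ _)).
by subst i'; move: (Ew i); rewrite !ffunE eqxx => /other_digit_inj ->.
Qed.

Lemma differ1P a w : differ1 a w -> exists i b, w = flip a i b.
Proof.
rewrite /differ1 => /cards1P [i Hi].
have Hj j : (a j != w j) = (j == i) by rewrite -in_set1 -Hi inE.
have := Hj i; rewrite eqxx eq_sym => /other_digitP [b Hb].
exists i, b; apply/ffunP => j; rewrite ffunE; case: eqP => [->|/eqP ne] //.
by apply/eqP; rewrite eq_sym; apply/negP => /negP; rewrite Hj (negbTE ne).
Qed.

End Words.

(* Only the first [r] letters are changed, so that words of length [k >= r] get exactly the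
   [2 r] neighbours that words of length [r] have. *)
Definition nbr r k (h : r <= k) (w : word k) (ib : 'I_r * bool) : word k :=
  flip w (widen_ord h ib.1) ib.2.

Section Neighbours.
Variables (r k : nat) (h : r <= k) (w : word k).

Lemma eq_nbr ib ib' : (nbr h w ib == nbr h w ib') = (ib == ib').
Proof.
by apply/eqP/eqP => [|-> //]; case: ib ib' => [i b] [i' b'] /flip_inj [/val_inj -> ->].
Qed.

Lemma nbr_eqF ib : (nbr h w ib == w) = false.
Proof. by apply/negbTE; rewrite eq_sym differ1_neq ?differ1_flip. Qed.

Lemma eq_nbrF ib : (w == nbr h w ib) = false.
Proof. by rewrite eq_sym nbr_eqF. Qed.

Lemma differ1_nbr ib : differ1 w (nbr h w ib).
Proof. exact: differ1_flip. Qed.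

Lemma differ1_nbrC ib : differ1 (nbr h w ib) w.
Proof. by rewrite differ1C differ1_nbr. Qed.

Definition nbr_index (w' : word k) : option ('I_r * bool) := [pick ib | w' == nbr h w ib].

Lemma nbr_indexK ib : nbr_index (nbr h w ib) = Some ib.
Proof.
rewrite /nbr_index; case: pickP => [ib' | /(_ ib)]; rewrite ?eq_nbr ?eqxx //.
by move/eqP ->.
Qed.

End Neighbours.

Lemma path_iota_succ (e : rel nat) a n :
  (forall m, a <= m < a + n -> e m m.+1) -> path e a (iota a.+1 n).
Proof.
elim: n a => [|n IH] a H //=; apply/andP; split.
  by apply: H; rewrite leqnn addnS ltnS leq_addr.
by apply: IH => m /andP [am mn]; apply: H; rewrite ltnW //= addnS -addSn.
Qed.

Section Route.
Variables (k : nat) (X Y : word k).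

Definition diff_pos : seq 'I_k := [seq j <- enum 'I_k | X j != Y j].
Definition route_word m : word k := [ffun j => if j \in take m diff_pos then Y j else X j].
Definition route : seq (word k) := map route_word (iota 1 (size diff_pos)).

Lemma mem_diff_pos j : (j \in diff_pos) = (X j != Y j).
Proof. by rewrite mem_filter mem_enum andbT. Qed.

Lemma uniq_diff_pos : uniq diff_pos.
Proof. by rewrite filter_uniq // enum_uniq. Qed.

Lemma route_word0 : route_word 0 = X.
Proof. by apply/ffunP => j; rewrite ffunE take0. Qed.

Lemma route_word_end : route_word (size diff_pos) = Y.
Proof. by apply/ffunP => j; rewrite ffunE take_size mem_diff_pos; case: eqP => // ->. Qed.

Lemma mem_take_diff_pos j0 m n : m < size diff_pos ->
  (nth j0 diff_pos m \in take n diff_pos) = (m < n).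
Proof. by move=> lt; rewrite in_take ?mem_nth // index_uniq // uniq_diff_pos. Qed.

Lemma route_word_step m : m < size diff_pos -> differ1 (route_word m) (route_word m.+1).
Proof.
move=> lt; have j0 : 'I_k by case: diff_pos lt.
rewrite /differ1 (_ : [set j | _ != _] = [set nth j0 diff_pos m]) ?cards1 //.
apply/setP => j; rewrite !inE !ffunE (take_nth j0 lt) mem_rcons inE.
case: (j =P nth j0 diff_pos m) => [->|_] /=; last by rewrite eqxx.
by rewrite mem_take_diff_pos // ltnn -mem_diff_pos mem_nth.
Qed.

Lemma route_word_neq m n : m < n -> n <= size diff_pos -> route_word m != route_word n.
Proof.
move=> lt le; have lt' : m < size diff_pos by apply: leq_trans le.
have j0 : 'I_k by case: diff_pos lt'.
apply/negP => /eqP /(congr1 (fun f : word k => f (nth j0 diff_pos m))).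
rewrite !ffunE !mem_take_diff_pos // ltnn lt => E.
by move: (mem_nth j0 lt'); rewrite mem_diff_pos E eqxx.
Qed.

(* Beyond its first step the route has corrected two distinct letters of [X]. *)
Lemma route_word_far m i b : 1 < m <= size diff_pos -> route_word m != flip X i b.
Proof.
case/andP=> lt le; have j0 : 'I_k by case: diff_pos le lt => [|j]; [case: m|].
apply/negP => /eqP E.
have Hi p : p < m -> nth j0 diff_pos p = i.
  move=> pm; have ps : p < size diff_pos by apply: leq_trans le.
  apply/eqP; apply: contraT => ne.
  move: (congr1 (fun f : word k => f (nth j0 diff_pos p)) E).
  rewrite !ffunE mem_take_diff_pos // pm (negbTE ne) => Ep.
  by move: (mem_nth j0 ps); rewrite mem_diff_pos Ep eqxx.
have l1 : 1 < size diff_pos by apply: leq_trans le.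
move: (nth_uniq j0 (ltnW l1) l1 uniq_diff_pos).
by rewrite !Hi // ?eqxx // ltnW.
Qed.

Lemma route_path : path (@differ1 k) X route.
Proof.
rewrite /route -[X in path _ X]route_word0 path_map.
by apply: path_iota_succ => m /andP [_ lt]; apply: route_word_step.
Qed.

Lemma route_last : last X route = Y.
Proof.
rewrite /route -[X in last X _]route_word0 last_map -route_word_end; congr route_word.
by case: (size diff_pos) => // n; rewrite -(addn1 n) iotaD last_cat /= addnC.
Qed.

Lemma route_uniq : uniq (X :: route).
Proof.
rewrite -[X in X :: _]route_word0 /route.
change (uniq (map route_word (iota 0 (size diff_pos).+1))).
rewrite map_inj_in_uniq ?iota_uniq // => x y; rewrite !mem_iota !add0n !ltnS => hx hy E.
case: (ltngtP x y) => // lt;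
  [move: (route_word_neq lt hy) | move: (route_word_neq lt hx)]; by rewrite E eqxx.
Qed.

Lemma size_route : size route <= k.
Proof.
rewrite size_map size_iota size_filter (leq_trans (count_size _ _)) //.
by rewrite size_enum_ord.
Qed.

Lemma route_cons : X != Y -> exists i b rest, route = flip X i b :: rest /\
  forall W, W \in rest -> forall i' b', W != flip X i' b'.
Proof.
move=> ne; have : 0 < size diff_pos.
  by rewrite lt0n; apply: contra ne => /eqP s0; rewrite -route_word0 -route_word_end s0.
case E: (size diff_pos) => [|n] // _.
have [i [b Eflip]] : exists i b, route_word 1 = flip X i b.
  by apply: differ1P; rewrite -[X in differ1 X]route_word0 route_word_step // E.
exists i, b, (map route_word (iota 2 n)); split; first by rewrite /route E -Eflip.
move=> W /mapP [m]; rewrite mem_iota => /andP [h1 h2] -> i' b'.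
by apply: route_word_far; rewrite h1 E; move: h2; rewrite addnC addn2.
Qed.

End Route.

Lemma route_notin k (X Y : word k) : (X \in route X Y) = false.
Proof. by have := route_uniq X Y; rewrite cons_uniq => /andP [/negbTE]. Qed.

Lemma route_uniq_tail k (X Y : word k) : uniq (route X Y).
Proof. by have := route_uniq X Y; rewrite cons_uniq => /andP []. Qed.

Lemma mem_route_end k (X Y : word k) : X != Y -> Y \in route X Y.
Proof.
by move=> ne; have := mem_last X (route X Y); rewrite route_last inE eq_sym (negbTE ne).
Qed.

Lemma uniq_insert (T : eqType) (s1 s2 M : seq T) :
  uniq (s1 ++ s2) -> uniq M -> all [predC M] (s1 ++ s2) -> uniq (s1 ++ M ++ s2).
Proof.
move=> u12 uM out.
have perm_mid : perm_eq (s1 ++ M ++ s2) (M ++ s1 ++ s2) by rewrite perm_catCA.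
rewrite (perm_uniq perm_mid) cat_uniq uM u12 andbT /=.
by apply/hasPn => y /(allP out).
Qed.

Section Graph.
Variables r s t : nat.
Local Notation V := (e3c_vertex r s t).
Local Notation adj := (@e3c_adj r s t).

Lemma vertex_eqE (A A' : word r) (B B' : word s) (C C' : word t) (d d' : 'I_3) :
  (((A, B, C, d) : V) == (A', B', C', d')) = [&& A == A', B == B', C == C' & d == d'].
Proof. by rewrite !xpair_eqE !andbA. Qed.

Lemma e3c_adjC (x y : V) : adj x y = adj y x.
Proof.
move: x y => [[[A B] C] d] [[[A' B'] C'] d'].
rewrite /e3c_adj /vA /vB /vC /vd /= [(A', B', C', d') == _]eq_sym.
rewrite [A' == A]eq_sym [B' == B]eq_sym [C' == C]eq_sym [d' == d]eq_sym.
rewrite (differ1C C') (differ1C B') (differ1C A').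
by congr (_ && [|| _, _, _ | _]); rewrite andbCA.
Qed.

Lemma adj_digit A B C (d d' : 'I_3) : d != d' -> adj (A, B, C, d) (A, B, C, d').
Proof. by move=> ne; rewrite /e3c_adj vertex_eqE /vA /vB /vC /vd /= !eqxx ne. Qed.

Lemma adj_layer0 A B C C' : differ1 C C' -> adj (A, B, C, d0) (A, B, C', d0).
Proof.
by move=> h; rewrite /e3c_adj vertex_eqE /vA /vB /vC /vd /= !eqxx (negbTE (differ1_neq h)) h.
Qed.

Lemma adj_layer1 A B B' C : differ1 B B' -> adj (A, B, C, d1) (A, B', C, d1).
Proof.
by move=> h; rewrite /e3c_adj vertex_eqE /vA /vB /vC /vd /= !eqxx (negbTE (differ1_neq h)) h orbT.
Qed.

Lemma adj_layer2 A A' B C : differ1 A A' -> adj (A, B, C, d2) (A', B, C, d2).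
Proof.
by move=> h; rewrite /e3c_adj vertex_eqE /vA /vB /vC /vd /= !eqxx (negbTE (differ1_neq h)) h !orbT.
Qed.

Definition layer2 (B : word s) (C : word t) (X : word r) : V := (X, B, C, d2).

Lemma mem_layer2 B C Xs (A : word r) B' C' d :
  (((A, B', C', d) : V) \in map (layer2 B C) Xs) = [&& A \in Xs, B' == B, C' == C & d == d2].
Proof.
apply/mapP/idP => [[X hX [-> -> -> ->]] | /and4P [h /eqP -> /eqP -> /eqP ->]].
  by rewrite hX !eqxx.
by exists A.
Qed.

Lemma interior_rcons (q : seq V) x : interior (rcons q x) = q.
Proof. by rewrite /interior size_rcons /= -cats1 take_size_cat. Qed.

Lemma is_path_rcons (u v : V) q :
  path adj u (rcons q v) -> uniq (u :: rcons q v) -> is_path u v (rcons q v).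
Proof. by move=> pq uq; rewrite /is_path pq uq last_rcons eqxx. Qed.

Lemma is_path_splice (u v : V) s1 B C X Y s2 :
  path adj u s1 -> last u s1 = layer2 B C X -> path adj (layer2 B C Y) (rcons s2 v) ->
  uniq (u :: s1 ++ rcons s2 v) ->
  all [predC map (layer2 B C) (route X Y)] (u :: s1 ++ rcons s2 v) ->
  is_path u v (rcons (s1 ++ map (layer2 B C) (route X Y) ++ s2) v).
Proof.
move=> p1 l1 p2 un out; apply: is_path_rcons.
  rewrite !rcons_cat !cat_path p1 l1 path_map last_map route_last p2 andbT /=.
  by apply: sub_path (route_path X Y) => W W' /= ?; apply: adj_layer2.
rewrite !rcons_cat -cat_cons; apply: uniq_insert => //.
by rewrite map_inj_uniq ?route_uniq_tail // => W W' [].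
Qed.

End Graph.

Definition disjoint_fan r s t (u v : e3c_vertex r s t) (n m : nat) : Prop :=
  exists P, [/\ size P = n, int_disjoint_paths u v P & forall p, p \in P -> size p <= m].

Lemma disjoint_interiors_map r s t r' s' t'
    (F : seq (e3c_vertex r s t) -> seq (e3c_vertex r' s' t')) P :
  {in P &, forall p q,
     has (mem (interior (F p))) (interior (F q)) -> has (mem (interior p)) (interior q)} ->
  [forall i : 'I_(size P), forall j : 'I_(size P),
     (i != j) ==> ~~ has (mem (interior (nth [::] P i))) (interior (nth [::] P j))] ->
  [forall i : 'I_(size (map F P)), forall j : 'I_(size (map F P)),
     (i != j) ==> ~~ has (mem (interior (nth [::] (map F P) i)))
                         (interior (nth [::] (map F P) j))].
Proof.
move=> F_has disjP; apply/forallP => i; apply/forallP => j; apply/implyP => nij.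
have hi : i < size P by case: (i) => ? /=; rewrite size_map.
have hj : j < size P by case: (j) => ? /=; rewrite size_map.
have := forallP (forallP disjP (Ordinal hi)) (Ordinal hj).
rewrite -(inj_eq val_inj) /= (inj_eq val_inj) in nij *.
by rewrite nij !(nth_map [::]) //; apply: contra; apply: F_has; apply: mem_nth.
Qed.

Section Fans.
Variables r s t : nat.
Local Notation V := (e3c_vertex r s t).
Local Notation adj := (@e3c_adj r s t).

Lemma tagged_fan (I : finType) (q : I -> seq V) (tag : V -> I) (u v : V) m :
  (forall j, is_path u v (rcons (q j) v)) -> (forall j, q j != [::]) ->
  (forall j, all (fun x => tag x == j) (q j)) -> (forall j, size (rcons (q j) v) <= m) ->
  disjoint_fan u v #|I| m.
Proof.
move=> q_path q_nil q_tag q_size.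
have tagP j x : x \in q j -> tag x = j by move=> xq; apply/eqP/(allP (q_tag j)).
exists [seq rcons (q j) v | j <- enum I]; split.
- by rewrite size_map cardE.
- apply/and3P; split.
  + by apply/allP => p /mapP [j _ ->].
  + rewrite map_inj_uniq ?enum_uniq // => j j' /rcons_inj [E].
    have := q_nil j; case Ej: (q j) => [|x l] // _.
    by rewrite -(tagP j x) ?Ej ?mem_head // (tagP j') // -E Ej mem_head.
  + apply/forallP => i; apply/forallP => j; apply/implyP => ne.
    have hi : i < size (enum I) by case: (i) => ? /=; rewrite size_map.
    have hj : j < size (enum I) by case: (j) => ? /=; rewrite size_map.
    have /hasP [x0 _ _] : has predT (enum I) by rewrite has_predT (leq_ltn_trans _ hi).
    rewrite !(nth_map x0) -?enumT // !interior_rcons; apply/hasPn => x xj; apply/negP => xi.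
    move: ne; rewrite -(inj_eq val_inj) /= -(nth_uniq x0 hi hj (enum_uniq I)).
    by rewrite -(tagP _ x xi) -(tagP _ x xj) eqxx.
- by move=> p /mapP [j _ ->].
Qed.

Definition reversal (v : V) (p : seq V) : seq V := rev (belast v p).

Lemma reversal_rcons (v u : V) q : reversal v (rcons q u) = rcons (rev q) v.
Proof. by rewrite /reversal belast_rcons rev_cons. Qed.

Lemma is_path_rev (u v : V) q : is_path v u (rcons q u) -> is_path u v (rcons (rev q) v).
Proof.
case/and3P => pq _ uq; apply/and3P; split; last 1 first.
- by rewrite -rcons_cons -rev_rcons -rev_cons rev_uniq.
- have := rev_path adj v (rcons q u); rewrite last_rcons belast_rcons rev_cons => ->.
  by apply: sub_path pq => x y; rewrite e3c_adjC.
- by rewrite last_rcons.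
Qed.

Lemma disjoint_fan_rev (u v : V) n m : u != v -> disjoint_fan v u n m -> disjoint_fan u v n m.
Proof.
move=> ne [P [sizeP /and3P [pathsP uniqP disjP] lenP]].
have rconsP p : p \in P -> exists q, p = rcons q u.
  move=> /(allP pathsP) /and3P [_ + _]; case/lastP: p => [|q x] /=.
    by rewrite eq_sym (negbTE ne).
  by rewrite last_rcons => /eqP ->; exists q.
exists (map (reversal v) P); split; first by rewrite size_map.
- apply/and3P; split.
  + apply/allP => _ /mapP [p pP ->]; have [q Eq] := rconsP p pP; subst p.
    by rewrite reversal_rcons is_path_rev // (allP pathsP).
  + rewrite map_inj_in_uniq // => p p' pP p'P.
    have [q ->] := rconsP p pP; have [q' ->] := rconsP p' p'P.
    by rewrite !reversal_rcons => /rcons_inj [/(congr1 rev)]; rewrite !revK => ->.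
  + apply: disjoint_interiors_map disjP => p p' pP p'P.
    have [q ->] := rconsP p pP; have [q' ->] := rconsP p' p'P.
    rewrite !reversal_rcons !interior_rcons has_rev.
    by apply: sub_has => x /=; rewrite mem_rev.
- move=> _ /mapP [p pP ->]; have [q Eq] := rconsP p pP.
  by have := lenP _ pP; rewrite Eq reversal_rcons !size_rcons size_rev.
Qed.

End Fans.

Lemma disjoint_fan_map r s t r' s' t' (f : e3c_vertex r s t -> e3c_vertex r' s' t') u v n m :
  injective f -> {homo f : x y / e3c_adj x y} ->
  disjoint_fan u v n m -> disjoint_fan (f u) (f v) n m.
Proof.
move=> f_inj f_adj [P [sizeP /and3P [pathsP uniqP disjP] lenP]].
exists (map (map f) P); split; first by rewrite size_map.
- apply/and3P; split.
  + apply/allP => _ /mapP [p pP ->]; case/and3P: (allP pathsP p pP) => pp lp up.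
    apply/and3P; split; last by rewrite -map_cons map_inj_uniq.
    * by rewrite path_map; apply: sub_path pp => x y /f_adj.
    * by rewrite last_map (eqP lp).
  + by rewrite map_inj_uniq // => p q; apply: inj_map.
  + apply: disjoint_interiors_map disjP => p q _ _.
    rewrite /interior !(size_map f) -!map_take has_map => /hasP [y yq].
    by rewrite /= mem_map // => yp; apply/hasP; exists y.
- by move=> _ /mapP [p pP ->]; rewrite size_map lenP.
Qed.

Section Constructions.
Variables (r s t : nat) (hrs : r <= s) (hrt : r <= t).
Variables (A A' : word r) (B : word s) (C : word t).
Hypothesis hAA : A != A'.
Local Notation V := (e3c_vertex r s t).
Local Notation index := (option (option ('I_r * bool))).
Local Notation nbA := (nbr (leqnn r) A).
Local Notation nbB := (nbr hrs B).
Local Notation nbC := (nbr hrt C).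

Lemma card_index : #|{: index}| = 2 * r + 2.
Proof. by rewrite !card_option card_prod card_ord card_bool; lia. Qed.

Lemma A_neqE : ((A == A') = false) * ((A' == A) = false).
Proof. by split; apply/negbTE; rewrite // eq_sym. Qed.

Ltac differ1_tac := first [exact: differ1_nbr | exact: differ1_nbrC].
Ltac adj_tac := match goal with
  | |- is_true (e3c_adj (?a, ?b, ?c, _) (?a, ?b, ?c, _)) => by apply: adj_digit
  | |- is_true (e3c_adj (?a, ?b, _, _) (?a, ?b, _, _)) => apply: adj_layer0; differ1_tac
  | |- is_true (e3c_adj (?a, _, ?c, _) (?a, _, ?c, _)) => apply: adj_layer1; differ1_tac
  | |- is_true (e3c_adj (_, ?b, ?c, _) (_, ?b, ?c, _)) => apply: adj_layer2; differ1_tac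
  end.
Ltac path_tac := rewrite /layer2 /= ?andbT; repeat (apply/andP; split; first adj_tac); adj_tac.
Ltac distinct_tac := rewrite ?inE ?mem_layer2 ?vertex_eqE ?eqxx ?A_neqE
  ?route_notin ?nbr_eqF ?eq_nbrF ?eq_nbr /= ?andbF ?andbT.
Ltac owner_tac := rewrite /= ?eqxx ?nbr_eqF ?eq_nbrF ?eq_nbr ?nbr_indexK /= ?eqxx.

Lemma all_map_layer2 (P : pred V) Bx Cx (Xs : seq (word r)) :
  (forall X, P (X, Bx, Cx, d2)) -> all P (map (layer2 Bx Cx) Xs).
Proof. by move=> HP; apply/allP => _ /mapP [X _ ->]; apply: HP. Qed.

Section Layers01.
Variable ib0 : 'I_r * bool.

Local Notation u01 := ((A, B, C, d0) : V).
Local Notation v01 := ((A', B, C, d1) : V).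

Definition walk01 (j : index) : seq V :=
  match j with
  | None => (A, B, C, d2) :: map (layer2 B C) (route A A')
  | Some None => [:: (A, B, C, d1); (A, nbB ib0, C, d1); (A, nbB ib0, C, d2)]
      ++ map (layer2 (nbB ib0) C) (route A A') ++ [:: (A', nbB ib0, C, d1)]
  | Some (Some ib) => if ib == ib0 then
      [:: (A, B, nbC ib0, d0); (A, B, nbC ib0, d2)] ++ map (layer2 B (nbC ib0)) (route A A')
        ++ [:: (A', B, nbC ib0, d0); (A', B, C, d0)]
    else [:: (A, B, nbC ib, d0); (A, B, nbC ib, d1); (A, nbB ib, nbC ib, d1);
             (A, nbB ib, nbC ib, d0); (A, nbB ib, C, d0); (A, nbB ib, C, d2)]
      ++ map (layer2 (nbB ib) C) (route A A') ++ [:: (A', nbB ib, C, d1)]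
  end.

Definition owner01 (x : V) : index :=
  let: (_, B', C', d) := x in
  if B' == B then
    if C' == C then (if d == d2 then None else if d == d1 then Some None else Some (Some ib0))
    else if d == d2 then Some (Some ib0) else omap Some (nbr_index hrt C C')
  else if B' == nbB ib0 then Some None else omap Some (nbr_index hrs B B').

Lemma walk01_path j : is_path u01 v01 (rcons (walk01 j) v01).
Proof.
case: j => [[ib|]|]; rewrite /walk01; [case: ifP => [_ | ne] | | ].
- apply: is_path_splice => //=; by [path_tac | distinct_tac].
- have ne' : (ib0 == ib) = false by rewrite eq_sym.
  apply: is_path_splice => //=; by [path_tac | distinct_tac; rewrite ?ne ?ne'].
- apply: is_path_splice => //=; by [path_tac | distinct_tac].
- rewrite -[map _ _]cats0.
  apply: (is_path_splice (s1 := [:: _])) => //=; by [path_tac | distinct_tac].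
Qed.

Lemma walk01_owner j : all (fun x => owner01 x == j) (walk01 j).
Proof.
case: j => [[ib|]|]; rewrite /walk01; [case: ifP => [/eqP -> | ne] | |];
  rewrite ?all_cat /=; repeat (apply/andP; split); try apply: all_map_layer2 => X;
  by owner_tac; try rewrite ne.
Qed.

Lemma size_walk01 j : size (rcons (walk01 j) v01) <= r + 8.
Proof.
have := size_route A A'; case: j => [[ib|]|]; rewrite /walk01; try case: ifP => _;
  by rewrite size_rcons /= ?size_cat size_map /=; lia.
Qed.

Lemma fan01 : disjoint_fan u01 v01 (2 * r + 2) (r + 8).
Proof.
rewrite -card_index; apply: (tagged_fan (tag := owner01)).
- exact: walk01_path.
- by case=> [[ib|]|] //=; case: ifP.
- exact: walk01_owner.
- exact: size_walk01.
Qed.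

End Layers01.

Section Layers20.
Variables (ib0 : 'I_r * bool) (rest : seq (word r)).
Hypothesis route_head : route A A' = nbA ib0 :: rest.
Hypothesis rest_far : forall W, W \in rest -> forall i b, W != flip A i b.

Lemma nbr_index_rest W : W \in rest -> nbr_index (leqnn r) A W = None.
Proof.
move=> Wrest; rewrite /nbr_index; case: pickP => // [[i b]] /eqP E.
by move: (rest_far Wrest (widen_ord (leqnn r) i) b); rewrite E eqxx.
Qed.

Lemma nbA_eqF ib : ib != ib0 -> (nbA ib == A') = false.
Proof.
move=> ne; apply/negP => /eqP E; have := mem_route_end hAA.
rewrite route_head inE -E eq_nbr (negbTE ne) /=.
by move=> /rest_far /(_ (widen_ord (leqnn r) ib.1) ib.2) /eqP.
Qed.

Local Notation u20 := ((A, B, C, d2) : V).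
Local Notation v20 := ((A', B, C, d0) : V).

Definition walk20 (j : index) : seq V :=
  match j with
  | None => [:: (A, B, C, d1); (A, nbB ib0, C, d1); (A, nbB ib0, C, d2)]
      ++ map (layer2 (nbB ib0) C) (route A A') ++ [:: (A', nbB ib0, C, d1); (A', B, C, d1)]
  | Some None => [:: (A, B, C, d0); (A, B, nbC ib0, d0); (A, B, nbC ib0, d2)]
      ++ map (layer2 B (nbC ib0)) (route A A') ++ [:: (A', B, nbC ib0, d0)]
  | Some (Some ib) => if ib == ib0 then map (layer2 B C) (route A A')
    else [:: (nbA ib, B, C, d2); (nbA ib, B, C, d0); (nbA ib, B, nbC ib, d0);
             (nbA ib, B, nbC ib, d2)]
      ++ map (layer2 B (nbC ib)) (route (nbA ib) A') ++ [:: (A', B, nbC ib, d0)]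
  end.

Definition owner20 (x : V) : index :=
  let: (X, B', C', d) := x in
  if d == d1 then None
  else if B' == B then
    if C' == C then
      (if d == d2 then Some (Some (odflt ib0 (nbr_index (leqnn r) A X)))
       else if X == A then Some None else omap Some (nbr_index (leqnn r) A X))
    else if C' == nbC ib0 then Some None else omap Some (nbr_index hrt C C')
  else None.

Lemma walk20_path j : is_path u20 v20 (rcons (walk20 j) v20).
Proof.
case: j => [[ib|]|]; rewrite /walk20; [case: ifP => [_ | ne] | | ].
- rewrite -[map _ _]cats0.
  apply: (is_path_splice (s1 := [::])) => //=; by [path_tac | distinct_tac].
- have ne' : (ib0 == ib) = false by rewrite eq_sym.
  have neA' := nbA_eqF (negbT ne).
  apply: is_path_splice => //=; by [path_tac | distinct_tac; rewrite ?ne ?ne' ?neA'].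
- apply: is_path_splice => //=; by [path_tac | distinct_tac].
- apply: is_path_splice => //=; by [path_tac | distinct_tac].
Qed.

Lemma walk20_owner j : all (fun x => owner20 x == j) (walk20 j).
Proof.
case: j => [[ib|]|]; rewrite /walk20; [case: ifP => [/eqP -> | ne] | |].
- rewrite route_head /= !eqxx nbr_indexK /= eqxx.
  by apply/allP => _ /mapP [W Wrest ->]; rewrite /= !eqxx nbr_index_rest.
all: rewrite ?all_cat /=; repeat (apply/andP; split); try apply: all_map_layer2 => X;
  by owner_tac; try rewrite ne.
Qed.

Lemma size_walk20 j : size (rcons (walk20 j) v20) <= r + 6.
Proof.
case: j => [[ib|]|]; rewrite /walk20; try case: ifP => _;
  rewrite size_rcons /= ?size_cat size_map /=;
  by match goal with |- context [size (route ?X ?Y)] => have := size_route X Y end; lia.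
Qed.

Lemma fan20_route : disjoint_fan u20 v20 (2 * r + 2) (r + 6).
Proof.
rewrite -card_index; apply: (tagged_fan (tag := owner20)).
- exact: walk20_path.
- by case=> [[ib|]|] //=; case: ifP; rewrite ?route_head.
- exact: walk20_owner.
- exact: size_walk20.
Qed.

End Layers20.
End Constructions.

Lemma fan20 r s t (hrs : r <= s) (hrt : r <= t) (A A' : word r) (B : word s) (C : word t) :
  A != A' -> disjoint_fan ((A, B, C, d2) : e3c_vertex r s t) (A', B, C, d0) (2 * r + 2) (r + 6).
Proof.
move=> hAA; have [i [b [rest [route_head rest_far]]]] := route_cons hAA.
apply: (fan20_route hrs hrt B C hAA (ib0 := (i, b)) _ rest_far).
by rewrite route_head; congr (flip _ _ _ :: _); apply: val_inj.
Qed.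

Definition swap01 (d : 'I_3) : 'I_3 := if val d == 0 then d1 else if val d == 1 then d0 else d.

Lemma swap01K : involutive swap01.
Proof. by case=> [[|[|[|?]]] ?] //; apply: val_inj. Qed.

Lemma swap01E (d : 'I_3) :
  [/\ (val (swap01 d) == 0) = (val d == 1), (val (swap01 d) == 1) = (val d == 0)
    & (val (swap01 d) == 2) = (val d == 2)].
Proof. by case: d => [[|[|[|?]]] ?]. Qed.

Definition swapBC r s t (x : e3c_vertex r s t) : e3c_vertex r t s :=
  let: (A, B, C, d) := x in (A, C, B, swap01 d).

Lemma swapBC_inj r s t : injective (@swapBC r s t).
Proof.
by case=> [[[A B] C] d] [[[A' B'] C'] d'] /= [-> -> -> /(can_inj swap01K) ->].
Qed.

Lemma e3c_adj_swapBC r s t (x y : e3c_vertex r s t) : e3c_adj (swapBC x) (swapBC y) = e3c_adj x y.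
Proof.
rewrite /e3c_adj (inj_eq (@swapBC_inj r s t)); congr (_ && _).
move: x y => [[[A B] C] d] [[[A' B'] C'] d'].
have [sw0 sw1 sw2] := swap01E d; have [sw0' sw1' sw2'] := swap01E d'.
rewrite /vA /vB /vC /vd /= sw0 sw1 sw2 sw0' sw1' sw2' (inj_eq (can_inj swap01K)).
rewrite (_ : forall x y z w : bool, [|| x, y, z | w] = [|| x, z, y | w]); last by do 4!case.
by congr [|| _, _, _ | _]; rewrite (andbCA (C == C')).
Qed.

Lemma fan21 r s t (hrs : r <= s) (hrt : r <= t) (A A' : word r) (B : word s) (C : word t) :
  A != A' -> disjoint_fan ((A, B, C, d2) : e3c_vertex r s t) (A', B, C, d1) (2 * r + 2) (r + 6).
Proof.
move=> hAA; apply: (disjoint_fan_map (@swapBC_inj r t s) _ (fan20 hrt hrs C B hAA)).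
by move=> x y; rewrite e3c_adj_swapBC.
Qed.

Definition fan_bound (d d' : 'I_3) : nat := if (d == 2 :> nat) || (d' == 2 :> nat) then 6 else 8.

Lemma e3c_fan r s t (u v : e3c_vertex r s t) :
  0 < r -> r <= s -> r <= t ->
  vA u != vA v -> vB u = vB v -> vC u = vC v -> vd u != vd v ->
  disjoint_fan u v (2 * r + 2) (r + fan_bound (vd u) (vd v)).
Proof.
move: u v => [[[A B] C] d] [[[A' B'] C'] d']; rewrite /vA /vB /vC /vd /=.
move=> r0 hrs hrt hAA <- <-.
have uv_neq (e e' : 'I_3) : ((A, B, C, e) : e3c_vertex r s t) != (A', B, C, e').
  by rewrite vertex_eqE (negbTE hAA).
case: (digit_cases d) => ->; case: (digit_cases d') => -> // _.
- exact: (fan01 hrs hrt B C hAA (Ordinal r0, false)).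
- by apply: disjoint_fan_rev (uv_neq _ _) (fan20 hrs hrt B C _); rewrite eq_sym.
- by apply: disjoint_fan_rev (uv_neq _ _) (fan01 hrs hrt B C _ (Ordinal r0, false)); rewrite eq_sym.
- by apply: disjoint_fan_rev (uv_neq _ _) (fan21 hrs hrt B C _); rewrite eq_sym.
- exact: fan20.
- exact: fan21.
Qed.

Theorem lemma18 (r s t : nat) (u v : e3c_vertex r s t) :
  1 <= r -> r <= s -> s <= t ->
  vA u != vA v -> vB u = vB v -> vC u = vC v -> vd u != vd v ->
  exists P : seq (seq (e3c_vertex r s t)),
    [/\ size P = 2 * r + 2,
        int_disjoint_paths u v P,
        (dset_is u v 0 1 -> forall p, p \in P -> size p <= r + 8) &
        (dset_is u v 0 2 || dset_is u v 1 2 ->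
           forall p, p \in P -> size p <= r + 6)].
Proof.
move=> r0 hrs hst hA hB hC hd.
have [P [sizeP disjP lenP]] := e3c_fan r0 hrs (leq_trans hrs hst) hA hB hC hd.
exists P; split=> // [_ | layer2_end] p /lenP; first by rewrite /fan_bound; case: ifP; lia.
by move: layer2_end; rewrite /dset_is /fan_bound => /orP [] /orP [] /andP [/eqP -> /eqP ->];
  rewrite ?orbT.
Qed.
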